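(* Let $\mu>0$, let $G$ be an $n$-vertex graph and let $\mathcal{F}$ be a $\mu n$-bounded incompatibility system over $G$. Then: (i) For every path $P$ in $G$, there are at most $\sqrt{\mu}\,n$ vertices of $G$ that are $2\sqrt{\mu}$-bad for $P$; the same holds for every cycle $C$ in $G$. (ii) For every vertex $v$, there are at most $\sqrt{\mu}\,n$ vertices that are $\sqrt{\mu}$-correlated with $v$.
   Context: All graphs are finite and simple. An incompatibility system $\mathcal{F}$ over $G=(V,E)$ is a family $\{F_v\}_{v\in V}$ where each $F_v$ is a set of unordered pairs $\{e,e'\}$ of distinct edges with $e\cap e'=\{v\}$; edges $e,e'$ are incompatible if $\{e,e'\}\in F_v$ for some $v$, compatible otherwise. For a positive real $\Delta$, $\mathcal{F}$ is $\Delta$-bounded if for every vertex $v$ and edge $e\ni v$, at most $\Delta$ other edges $e'\ni v$ satisfy $\{e,e'\}\in F_v$. For a path $P=(v_0,\dots,v_\ell)$, $|P|$ denotes its number of vertices. For a vertex $w$ (not necessarily on $P$), a vertex $v_i\in V(P)$ adjacent to $w$ is a bad neighbor of $w$ in $P$ if the edge $\{w,v_i\}$ is incompatible with $\{v_i,v_{i-1}\}$ or with $\{v_i,v_{i+1}\}$ (for those of these that are edges of $P$); otherwise it is a good neighbor. For $\gamma>0$, $w$ is $\gamma$-bad for $P$ if it has at least $\gamma|P|$ bad neighbors in $P$, and $\gamma$-good otherwise. The same notions are defined for cycles (indices taken cyclically, $|C|$ the number of vertices). Two vertices $v_1,v_2$ are $\gamma$-correlated if there are at least $\gamma n$ vertices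 $w$ such that $\{v_1,w\}$ and $\{v_2,w\}$ are edges that are incompatible; otherwise they are $\gamma$-uncorrelated. *)

From mathcomp Require Import all_boot all_order all_algebra.
Set Implicit Arguments. Unset Strict Implicit. Unset Printing Implicit Defensive.
Import Order.TTheory GRing.Theory Num.Theory.
Local Open Scope ring_scope.

Definition simple_graph (T : finType) (e : rel T) : Prop :=
  symmetric e /\ irreflexive e.

(* An incompatibility system: F v x y  means that the edges {v,x} and {v,y}
   form a pair belonging to F_v.  Since two distinct edges meeting exactly in v
   determine v, this encodes the family {F_v}. *)
Definition incompat_system (T : finType) (e : rel T) (F : T -> T -> T -> bool) : Prop :=
  (forall v x y, F v x y -> [&& e v x, e v y & x != y]) /\
  (forall v x y, F v x y = F v y x).

Definition Delta_bounded (R : numDomainType) (T : finType) (e : rel T)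
  (F : T -> T -> T -> bool) (Delta : R) : Prop :=
  forall v x, e v x -> (#|[set y | F v x y]|%:R : R) <= Delta.

Definition is_gpath (T : finType) (e : rel T) (P : seq T) : Prop :=
  [/\ P != [::], uniq P & sorted e P].

Definition is_gcycle (T : finType) (e : rel T) (C : seq T) : Prop :=
  [/\ (3 <= size C)%N, uniq C & cycle e C].

Definition path_bad_nb (T : finType) (e : rel T) (F : T -> T -> T -> bool)
  (P : seq T) (w v : T) : bool :=
  let i := index v P in
  [&& v \in P, e w v &
    ((0 < i)%N && F v w (nth v P i.-1)) || ((i.+1 < size P)%N && F v w (nth v P i.+1))].

Definition cycle_bad_nb (T : finType) (e : rel T) (F : T -> T -> T -> bool)
  (C : seq T) (w v : T) : bool :=
  [&& v \in C, e w v & F v w (prev C v) || F v w (next C v)].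

Definition path_gamma_bad (R : numDomainType) (T : finType) (e : rel T)
  (F : T -> T -> T -> bool) (gamma : R) (P : seq T) (w : T) : bool :=
  gamma * (size P)%:R <= #|[set v | path_bad_nb e F P w v]|%:R.

Definition cycle_gamma_bad (R : numDomainType) (T : finType) (e : rel T)
  (F : T -> T -> T -> bool) (gamma : R) (C : seq T) (w : T) : bool :=
  gamma * (size C)%:R <= #|[set v | cycle_bad_nb e F C w v]|%:R.

Definition gamma_correlated (R : numDomainType) (T : finType) (e : rel T)
  (F : T -> T -> T -> bool) (gamma : R) (v1 v2 : T) : bool :=
  gamma * #|T|%:R <= #|[set w | [&& e v1 w, e v2 w & F w v1 v2]]|%:R.

(** Each vertex [v] of a path (or cycle) has at most two neighbours on it, and
    by [Delta]-boundedness at most [2 Delta] vertices [w] make [{w, v}]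
    incompatible with one of the two edges of the path at [v].  Double counting
    the pairs (w, v) with [v] a bad neighbour of [w] shows that at most
    [2 Delta / gamma] vertices can have [gamma |P|] bad neighbours; for
    [Delta = mu n] and [gamma = 2 sqrt mu] this is [sqrt mu n].  Likewise each
    [w] witnesses the correlation of [v] with at most [Delta] vertices [u],
    which bounds the number of [sqrt mu]-correlated [u] by [sqrt mu n]. *)

From mathcomp Require Import all_boot all_order all_algebra.
From mathcomp Require Import ring.
Set Implicit Arguments. Unset Strict Implicit. Unset Printing Implicit Defensive.
Import Order.TTheory GRing.Theory Num.Theory.
Local Open Scope ring_scope.

Lemma sum_card_rowsE (T : finType) (B : rel T) (D : {set T}) :
  (forall w v, B w v -> v \in D) ->
  (\sum_w #|[set v | B w v]| = \sum_(v in D) #|[set w | B w v]|)%N.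
Proof.
move=> BD; under eq_bigr do rewrite -sum1dep_card.
rewrite (exchange_big_dep (mem D)) /=; last by move=> w v _ /BD.
by apply: eq_bigr => v _; rewrite sum1dep_card.
Qed.

(* Double counting: few rows of a 0/1 matrix can be heavy when all columns,
   supported on [D], are light. *)
Lemma card_heavy_rows_le (R : numDomainType) (T : finType) (B : rel T)
    (D : {set T}) (m : nat) (g c : R) :
  (0 < m)%N -> (#|D| <= m)%N -> 0 <= c ->
  (forall w v, B w v -> v \in D) ->
  (forall v, #|[set w | B w v]|%:R <= c) ->
  #|[set w | g * m%:R <= #|[set v | B w v]|%:R]|%:R * g <= c.
Proof.
move=> m_gt0 Dm c_ge0 BD col_le.
set H := [set w | _].
have m_pos : 0 < m%:R :> R by rewrite ltr0n.
rewrite -(ler_pM2r m_pos) -mulrA [X in X <= _]mulr_natl -sumr_const.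
have heavy_rows : \sum_(w in H) g * m%:R <= (\sum_w #|[set v | B w v]|)%:R.
  apply: le_trans (_ : \sum_(w in H) #|[set v | B w v]|%:R <= _).
    by apply: ler_sum => w; rewrite inE.
  rewrite -natr_sum ler_nat big_mkcond /=.
  by apply: leq_sum => w _; case: (w \in H).
apply: le_trans heavy_rows _.
rewrite (sum_card_rowsE BD) natr_sum.
apply: le_trans (_ : \sum_(v in D) c <= _); first exact: ler_sum.
by rewrite sumr_const -[c *+ _]mulr_natr ler_wpM2l ?ler_nat.
Qed.

Section BoundedIncompatibility.

Variables (R : numDomainType) (T : finType) (e : rel T).
Variables (F : T -> T -> T -> bool) (Delta : R).
Hypotheses (F_sys : incompat_system e F) (F_bounded : Delta_bounded e F Delta).
Hypothesis Delta_ge0 : 0 <= Delta.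

(* Without the edge [{v, x}] the set is empty, so no adjacency hypothesis. *)
Lemma card_incompat_le v x : #|[set y | F v x y]|%:R <= Delta.
Proof.
have [vx | nvx] := boolP (e v x); first exact: F_bounded.
suff -> : [set y | F v x y] = set0 by rewrite cards0.
apply/setP => y; rewrite !inE; apply/negbTE/negP => /F_sys.1 /and3P[vx _ _].
by rewrite vx in nvx.
Qed.

Lemma card_incompat_either_le v y1 y2 :
  #|[set w | F v w y1 || F v w y2]|%:R <= Delta *+ 2.
Proof.
have F_sym x y : F v x y = F v y x by exact: F_sys.2.
rewrite mulr2n; apply: le_trans (_ : (#|[set w | F v y1 w]| + #|[set w | F v y2 w]|)%:R <= _).
  rewrite ler_nat; apply: leq_trans (leq_card_setU _ _); apply: subset_leq_card.
  by apply/subsetP => w; rewrite !inE !(F_sym w).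
by rewrite natrD lerD ?card_incompat_le.
Qed.

Lemma card_bad_le (bad : rel T) (D : {set T}) (m : nat) (y1 y2 : T -> T) gamma :
  (0 < m)%N -> (#|D| <= m)%N ->
  (forall w v, bad w v -> (v \in D) && (F v w (y1 v) || F v w (y2 v))) ->
  #|[set w | gamma * m%:R <= #|[set v | bad w v]|%:R]|%:R * gamma <= Delta *+ 2.
Proof.
move=> m_gt0 Dm badP; apply: card_heavy_rows_le Dm _ _ _ => //.
- by rewrite mulrn_wge0.
- by move=> w v /badP /andP[].
- move=> v; apply: le_trans (card_incompat_either_le v (y1 v) (y2 v)).
  rewrite ler_nat; apply: subset_leq_card; apply/subsetP => w.
  by rewrite !inE => /badP /andP[].
Qed.

Lemma card_path_bad_le (P : seq T) gamma : P != [::] ->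
  #|[set w | path_gamma_bad e F gamma P w]|%:R * gamma <= Delta *+ 2.
Proof.
move=> P_nil; apply: (card_bad_le (D := [set v in P])
  (y1 := fun v => nth v P (index v P).-1) (y2 := fun v => nth v P (index v P).+1)).
- by rewrite lt0n size_eq0.
- by rewrite cardsE card_size.
- move=> w v /and3P[vP _ bad_wv]; rewrite inE vP /=.
  by case/orP: bad_wv => /andP[_ ->]; rewrite ?orbT.
Qed.

Lemma card_cycle_bad_le (C : seq T) gamma : C != [::] ->
  #|[set w | cycle_gamma_bad e F gamma C w]|%:R * gamma <= Delta *+ 2.
Proof.
move=> C_nil; apply: (card_bad_le (D := [set v in C]) (y1 := prev C) (y2 := next C)).
- by rewrite lt0n size_eq0.
- by rewrite cardsE card_size.
- by move=> w v /and3P[vC _ ->]; rewrite inE vC.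
Qed.

Lemma card_correlated_le v gamma : (0 < #|T|)%N ->
  #|[set u | gamma_correlated e F gamma v u]|%:R * gamma <= Delta.
Proof.
move=> T_gt0; apply: (card_heavy_rows_le (D := [set: T])) => //.
- by rewrite cardsT.
- move=> w; apply: le_trans (card_incompat_le w v).
  rewrite ler_nat; apply: subset_leq_card; apply/subsetP => u.
  by rewrite !inE => /and3P[_ _ ->].
Qed.

End BoundedIncompatibility.

Theorem proposition2p4 (R : rcfType) (mu : R) (T : finType) (e : rel T)
  (F : T -> T -> T -> bool) :
  0 < mu -> simple_graph e -> incompat_system e F ->
  Delta_bounded e F (mu * #|T|%:R) ->
  [/\ (forall P : seq T, is_gpath e P ->
         #|[set w | path_gamma_bad e F (2 * Num.sqrt mu) P w]|%:R
           <= Num.sqrt mu * #|T|%:R),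
      (forall C : seq T, is_gcycle e C ->
         #|[set w | cycle_gamma_bad e F (2 * Num.sqrt mu) C w]|%:R
           <= Num.sqrt mu * #|T|%:R) &
      (forall v : T,
         #|[set u | gamma_correlated e F (Num.sqrt mu) v u]|%:R
           <= Num.sqrt mu * #|T|%:R)].
Proof.
move=> mu_gt0 _ F_sys F_bounded.
have Delta_ge0 : 0 <= mu * #|T|%:R by rewrite mulr_ge0 ?ler0n ?ltW.
have sqrt_gt0 : 0 < Num.sqrt mu by rewrite sqrtr_gt0.
have scale (k a : R) : 0 < a ->
    k * (a * Num.sqrt mu) <= a * (mu * #|T|%:R) -> k <= Num.sqrt mu * #|T|%:R.
  move=> a_gt0 k_le; rewrite -(ler_pM2r (mulr_gt0 a_gt0 sqrt_gt0)).
  suff -> : Num.sqrt mu * #|T|%:R * (a * Num.sqrt mu) = a * (mu * #|T|%:R) by [].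
  by rewrite -[in RHS](sqr_sqrtr (ltW mu_gt0)); ring.
split.
- move=> P [P_nil _ _]; apply: (scale _ 2) => //.
  by rewrite [leRHS]mulr_natl (card_path_bad_le F_sys F_bounded).
- move=> C [C_ge3 _ _]; apply: (scale _ 2) => //.
  rewrite [leRHS]mulr_natl (card_cycle_bad_le F_sys F_bounded) //.
  by rewrite -size_eq0 -lt0n (leq_trans _ C_ge3).
- move=> v; have [T_0 | T_gt0] := posnP #|T|.
    by rewrite T_0 mulr0 lern0 -leqn0 -T_0 max_card.
  apply: (scale _ 1) => //; rewrite !mul1r.
  exact: card_correlated_le.
Qed.
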